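(* Let $\mathcal P_s$ be the strong-identification parameter space defined below. Then $\inf_{(\theta,F)\in\mathcal P_s}\tau_{\min}(A_F)>0$, where $\tau_{\min}(A_F)$ denotes the smallest singular value of $A_F$.
   Context: General MTE setup. Observables are $(Y,D,Z)$ with $Y\in\mathbb R$, $D\in\{0,1\}$, $Z$ discrete with support $\{z_0,\dots,z_K\}$. Fix an integer $M\ge1$ and known continuous functions $h_1,\dots,h_M$ on $(0,1)$; set $\lambda_{10}=\lambda_{00}\equiv1$ and for $m=1,\dots,M$, $p\in(0,1)$: $\lambda_{1m}(p)=\frac1p\int_0^p h_m(u)du$, $\lambda_{0m}(p)=\frac1{1-p}\int_p^1 h_m(u)du$. For $p=(p(z_0),\dots,p(z_K))'\in(0,1)^{K+1}$ let $A_d(p)$ be the $(K+1)\times(M+1)$ matrix with $(\ell,m)$ entry $\lambda_{dm}(p(z_\ell))$ ($\ell=0,\dots,K$; $m=0,\dots,M$), and $A(p)=\mathrm{diag}(A_1(p),A_0(p))\in\mathbb R^{2(K+1)\times 2(M+1)}$. Parameters: $\theta=(\theta_1',\theta_0')'$, $\theta_d=(\theta_{d0},\dots,\theta_{dM})'=(\mu_d,\rho_{d1},\dots,\rho_{dM})'$. For a distribution $F$ of $(Y,D,Z)$: $q_F(z_\ell)=P_F(Z=z_\ell)$, $p_F(z_\ell)=P_F(D=1\mid Z=z_\ell)$, $p_F=(p_F(z_0),\dots,p_F(z_K))'$, $\beta_{F,d\ell}=E_F[Y\mid D=d,Z=z_\ell]$, $\beta_{F,d}=(\beta_{F,d0},\dots,\beta_{F,dK})'$,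 $\beta_F=(\beta_{F,1}',\beta_{F,0}')'$, $\sigma^2_{F,d\ell}=\mathrm{Var}_F(Y\mid D=d,Z=z_\ell)$, $A_F=A(p_F)$. Parameter space: fix $\delta,\zeta>0$, $\epsilon\in(0,1/2)$ and a compact $\Theta\subset\mathbb R^{2(M+1)}$ with nonempty interior. $\mathcal P$ is the set of pairs $(\theta,F)$ such that (i) $K\ge M$, $\theta\in\mathrm{int}(\Theta)$ and $A_F\theta=\beta_F$; (ii) $\sup_{d\in\{0,1\}}\sup_{\ell}E_F[|Y|^{2+\delta}\mid D=d,Z=z_\ell]\le\zeta$; (iii) $\epsilon\le p_F(z_\ell)\le 1-\epsilon$ for all $\ell$; (iv) $\epsilon\le q_F(z_\ell)\le1-\epsilon$ for all $\ell$; (v) $\sigma^2_{F,d\ell}\ge\epsilon$ for all $d,\ell$. Strong-identification parameter space: $\mathcal P_s$ is the set of $(\theta,F)\in\mathcal P$ (same $\delta,\zeta,\epsilon$) such that the families $\{\lambda_{1m}\}_{m=0}^M$ and $\{\lambda_{0m}\}_{m=0}^M$ are each unisolvent on $(0,1)$ (a set of $n$ functions $f_1,\dots,f_n$ is unisolvent on $\Omega$ if for any $n$ distinct points $x_1,\dots,x_n\in\Omega$ the matrix $(f_i(x_j))$ has nonzero determinant), and there exists an index set $\mathcal S\subseteq\{0,\dots,K\}$ with $|\mathcal S|=M+1$ and $\min_{j,k\in\mathcal S,j\ne k}|p_F(z_j)-p_F(z_k)|\ge\epsilon$. *)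

From HB Require Import structures.
From mathcomp Require Import all_boot all_order all_algebra.
From mathcomp Require Import all_classical all_reals all_analysis.
Import Order.TTheory GRing.Theory Num.Theory.
Unset Printing Implicit Defensive.
Local Open Scope classical_set_scope.
Local Open Scope ring_scope.

Section MTEDefs.
Variable R : realType.

Definition lam (h : nat -> R -> R) (d : bool) (m : nat) (p : R) : R :=
  if m == 0%N then 1
  else if d then p^-1 * Rintegral lebesgue_measure [set u : R | 0 < u < p] (h m)
  else (1 - p)^-1 * Rintegral lebesgue_measure [set u : R | p < u < 1] (h m).

Definition Ad (h : nat -> R -> R) (M K : nat) (d : bool) (p : 'I_K.+1 -> R)
  : 'M[R]_(K.+1, M.+1) :=
  \matrix_(l < K.+1, m < M.+1) lam h d m (p l).

Definition Amat (h : nat -> R -> R) (M K : nat) (p : 'I_K.+1 -> R)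
  : 'M[R]_(K.+1 + K.+1, M.+1 + M.+1) :=
  block_mx (Ad h M K true p) 0 0 (Ad h M K false p).

Definition sv_min (r c : nat) (A : 'M[R]_(r, c)) : R :=
  inf [set Num.sqrt a | a in [set a : R | eigenvalue (A^T *m A) a]].

Definition unisolvent (n : nat) (f : 'I_n -> R -> R) : Prop :=
  forall x : 'I_n -> R, injective x -> (forall j, 0 < x j < 1) ->
    \det (\matrix_(i < n, j < n) f i (x j)) != 0.

(* A distribution F of (Y,D,Z), Z with support {z_0,...,z_K}, is encoded by
   q l = P(Z = z_l), p l = P(D = 1 | Z = z_l) and the conditional laws
   mu d l of Y given D = d, Z = z_l. *)
Definition is_dist (K : nat) (q p : 'I_K.+1 -> R) : Prop :=
  (forall l, 0 <= q l) /\ \sum_l q l = 1 /\ (forall l, 0 <= p l <= 1).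

Definition cmean (mu : probability R R) : R := Rintegral mu setT (fun y => y).

Definition cvar (mu : probability R R) : R :=
  Rintegral mu setT (fun y => (y - cmean mu) ^+ 2).

Definition betaF (K : nat) (mu : bool -> 'I_K.+1 -> probability R R)
  : 'cV[R]_(K.+1 + K.+1) :=
  col_mx (\col_(l < K.+1) cmean (mu true l)) (\col_(l < K.+1) cmean (mu false l)).

Definition Ps (h : nat -> R -> R) (M K : nat) (delta zeta eps : R)
  (Theta : set 'cV[R]_(M.+1 + M.+1)) (theta : 'cV[R]_(M.+1 + M.+1))
  (q p : 'I_K.+1 -> R) (mu : bool -> 'I_K.+1 -> probability R R) : Prop :=
  is_dist K q p /\
  (M <= K)%N /\ interior (Theta : set 'cV[R^o]_(M.+1 + M.+1)) theta /\
  Amat h M K p *m theta = betaF K mu /\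
  (forall d l, (\int[mu d l]_y ((`|y| `^ (2 + delta))%:E) <= zeta%:E)%E) /\
  (forall l, eps <= p l <= 1 - eps) /\
  (forall l, eps <= q l <= 1 - eps) /\
  (forall d l, eps <= cvar (mu d l)) /\
  unisolvent M.+1 (fun m : 'I_M.+1 => lam h true m) /\
  unisolvent M.+1 (fun m : 'I_M.+1 => lam h false m) /\
  (exists S : {set 'I_K.+1}, #|S| = M.+1 /\
     {in S &, forall j k, j != k -> eps <= `|p j - p k|}).

End MTEDefs.

(* Restricting A(p) to M+1 rows indexed by an [eps]-separated set of
   propensities leaves, for d = 1, 0, the square matrices
   (lambda_dm(x_j))_{j,m} evaluated at points x of the compact set of
   [eps]-separated configurations in [eps, 1 - eps]^(M+1).  Unisolvence makes
   them invertible there, and the lambda_dm are continuous (fundamental theorem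
   of calculus), so their inverses are uniformly bounded: |w|^2 <= C |A(p) w|^2
   with C independent of F.  Every eigenvalue of A(p)^T A(p) is then at least
   1/C, and A(p)^T A(p) has a real eigenvalue because it is symmetric. *)

From HB Require Import structures.
From mathcomp Require Import all_boot all_order all_algebra.
From mathcomp Require Import all_classical all_reals all_analysis.
From mathcomp Require Import complex.
From mathcomp Require spectral.
From mathcomp Require Import ring lra.
Import Order.TTheory GRing.Theory Num.Theory.
Import numFieldNormedType.Exports.
Set Implicit Arguments.
Unset Strict Implicit.
Unset Printing Implicit Defensive.
Local Open Scope classical_set_scope.
Local Open Scope ring_scope.

Section RealDot.
Variable R : realDomainType.

Definition rdot n (u v : 'rV[R]_n) : R := (u *m v^T) 0 0.

Lemma rdotC n (u v : 'rV[R]_n) : rdot u v = rdot v u.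
Proof. by rewrite /rdot -[in LHS](trmxK (u *m v^T)) mxE trmx_mul trmxK. Qed.

Lemma rdotDl n (u1 u2 v : 'rV[R]_n) : rdot (u1 + u2) v = rdot u1 v + rdot u2 v.
Proof. by rewrite /rdot mulmxDl mxE. Qed.

Lemma rdotZl n a (u v : 'rV[R]_n) : rdot (a *: u) v = a * rdot u v.
Proof. by rewrite /rdot -scalemxAl mxE. Qed.

Lemma rdotBl n (u1 u2 v : 'rV[R]_n) : rdot (u1 - u2) v = rdot u1 v - rdot u2 v.
Proof. by rewrite rdotDl -scaleN1r rdotZl mulN1r. Qed.

Lemma rdot_sqr n (u : 'rV[R]_n) : rdot u u = \sum_j u 0 j ^+ 2.
Proof. by rewrite /rdot mxE; apply: eq_bigr => j _; rewrite mxE expr2. Qed.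

Lemma rdot_ge0 n (u : 'rV[R]_n) : 0 <= rdot u u.
Proof. by rewrite rdot_sqr sumr_ge0 // => j _; rewrite sqr_ge0. Qed.

Lemma rdot_eq0 n (u : 'rV[R]_n) : (rdot u u == 0) = (u == 0).
Proof.
apply/idP/eqP => [|->]; last first.
  by rewrite rdot_sqr big1 // => j _; rewrite mxE expr0n.
rewrite rdot_sqr psumr_eq0 => [/allP u0|j _]; last exact: sqr_ge0.
apply/rowP => j; rewrite mxE; apply/eqP; rewrite -sqrf_eq0.
exact: u0 j (mem_index_enum _).
Qed.

Lemma rdot_row_mx n1 n2 (u1 : 'rV[R]_n1) (u2 : 'rV[R]_n2) :
  rdot (row_mx u1 u2) (row_mx u1 u2) = rdot u1 u1 + rdot u2 u2.
Proof. by rewrite /rdot tr_row_mx mul_row_col mxE. Qed.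

Lemma rdot_mulmx_sym n (B : 'M[R]_n) (u v : 'rV[R]_n) : B^T = B ->
  rdot (u *m B) v = rdot (v *m B) u.
Proof. by move=> BT; rewrite rdotC /rdot trmx_mul BT mulmxA. Qed.

End RealDot.

Section SymmetricEigenvalue.
Variable R : rcfType.

Lemma Re_sum (I : Type) (r : seq I) (F : I -> R[i]) :
  complex.Re (\sum_(i <- r) F i) = \sum_(i <- r) complex.Re (F i).
Proof. exact: (raddf_sum (@complex.Re R : Rcomplex R -> R)). Qed.

Lemma Im_sum (I : Type) (r : seq I) (F : I -> R[i]) :
  complex.Im (\sum_(i <- r) F i) = \sum_(i <- r) complex.Im (F i).
Proof. exact: (raddf_sum (@complex.Im R : Rcomplex R -> R)). Qed.

(* Split a complex eigenvector [a + i b] of the real symmetric [B]: if the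
   eigenvalue is [x + i y], then [a B = x a - y b] and [b B = x b + y a], and
   symmetry of [B] forces [y (|a|^2 + |b|^2) = 0]. *)
Lemma symmetric_real_eigenvalue n (B : 'M[R]_n) :
  (0 < n)%N -> B^T = B -> exists x, eigenvalue B x.
Proof.
move=> n_gt0 BT.
have [[x y] /eigenvalueP [v vB v_neq0]] :=
  spectral.eigenvalue_closed (map_mx (real_complex R) B) n_gt0.
pose a := map_mx (@complex.Re R) v; pose b := map_mx (@complex.Im R) v.
have aB : a *m B = x *: a - y *: b.
  apply/rowP => k; move/rowP: vB => /(_ k) /(congr1 (@complex.Re R)).
  rewrite !mxE Re_sum; case: (v 0 k) => ? ? /= <-; apply: eq_bigr => j _.
  by rewrite !mxE; case: (v 0 j) => ? ? /=; rewrite mulr0 subr0.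
have bB : b *m B = x *: b + y *: a.
  apply/rowP => k; move/rowP: vB => /(_ k) /(congr1 (@complex.Im R)).
  rewrite !mxE Im_sum; case: (v 0 k) => ? ? /= <-; apply: eq_bigr => j _.
  by rewrite !mxE; case: (v 0 j) => ? ? /=; rewrite mulr0 add0r.
have y_norm : y * (rdot a a + rdot b b) = 0.
  have := rdot_mulmx_sym a b BT.
  by rewrite aB bB rdotBl rdotDl !rdotZl (rdotC b a); nra.
have ab_neq0 : (a != 0) || (b != 0).
  apply: contraNT v_neq0; rewrite negb_or !negbK => /andP[/eqP a0 /eqP b0].
  apply/eqP/rowP => k; move/rowP: a0 => /(_ k); move/rowP: b0 => /(_ k).
  by rewrite !mxE; case: (v 0 k) => ? ? /= -> ->.
have y0 : y = 0.
  move/eqP: y_norm; rewrite mulf_eq0 paddr_eq0 ?rdot_ge0 // !rdot_eq0.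
  case/orP => [/eqP //|/andP[/eqP a0 /eqP b0]].
  by move: ab_neq0; rewrite a0 b0 eqxx.
exists x; apply/eigenvalueP; case/orP: ab_neq0 => [a_neq0|b_neq0].
  by exists a; rewrite // aB y0 scale0r subr0.
by exists b; rewrite // bB y0 scale0r addr0.
Qed.

End SymmetricEigenvalue.

Lemma sqr_sum_mul_le (R : realFieldType) (I : finType) (a b : I -> R) :
  (\sum_i a i * b i) ^+ 2 <= (\sum_i a i ^+ 2) * \sum_i b i ^+ 2.
Proof.
have lagrange : \sum_i \sum_j (a i * b j - a j * b i) ^+ 2 =
    2 * ((\sum_i a i ^+ 2) * (\sum_i b i ^+ 2) - (\sum_i a i * b i) ^+ 2).
  transitivity (\sum_i \sum_j (a i ^+ 2 * b j ^+ 2 + b i ^+ 2 * a j ^+ 2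
                               - (2 * (a i * b i)) * (a j * b j))).
    by apply: eq_bigr => i _; apply: eq_bigr => j _; ring.
  under eq_bigr do rewrite sumrB big_split /=.
  rewrite sumrB big_split /= -!big_distrlr /= -mulr_sumr; ring.
have : 0 <= \sum_i \sum_j (a i * b j - a j * b i) ^+ 2.
  by apply: sumr_ge0 => i _; apply: sumr_ge0 => j _; exact: sqr_ge0.
rewrite lagrange; lra.
Qed.

Lemma sum_comp_inj_le (R : numDomainType) (I J : finType)
    (s : I -> J) (f : J -> R) :
  injective s -> (forall j, 0 <= f j) -> \sum_i f (s i) <= \sum_j f j.
Proof.
move=> s_inj f_ge0; rewrite -(big_imset _ (in2W s_inj)) /=.
set A := [set s _ | _ in _]%SET.
rewrite [leRHS](bigID (mem A)) /= lerDl.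
exact: sumr_ge0.
Qed.

Section BoundedBelow.
Variable R : realFieldType.

(* [|w|^2 <= C |A w|^2] for column vectors [w], i.e. [A] is injective with a
   smallest singular value at least [C^-1/2]. *)
Definition bounded_below r c (C : R) (A : 'M[R]_(r, c)) : Prop :=
  forall w : 'rV[R]_c, rdot w w <= C * rdot (w *m A^T) (w *m A^T).

Lemma bounded_below_rowsub r r' c C (s : 'I_r' -> 'I_r) (A : 'M[R]_(r, c)) :
  0 <= C -> injective s -> bounded_below C (rowsub s A) -> bounded_below C A.
Proof.
move=> C_ge0 s_inj As w; apply: le_trans (As w) _; rewrite ler_wpM2l //.
rewrite trmx_mxsub mulmx_colsub !rdot_sqr.
under eq_bigr do rewrite mxE.
by apply: sum_comp_inj_le => // j; exact: sqr_ge0.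
Qed.

Lemma bounded_below_block_diag r1 r2 c1 c2 C
    (A1 : 'M[R]_(r1, c1)) (A2 : 'M[R]_(r2, c2)) :
  bounded_below C A1 -> bounded_below C A2 ->
  bounded_below C (block_mx A1 0 0 A2).
Proof.
move=> A1b A2b w; rewrite -(hsubmxK w) tr_block_mx !trmx0 mul_row_block.
rewrite !mulmx0 addr0 add0r !rdot_row_mx mulrDr.
exact: lerD (A1b _) (A2b _).
Qed.

Lemma bounded_below_invmx n C (G : 'M[R]_n) : G \in unitmx ->
  \sum_i \sum_j invmx G i j ^+ 2 <= C -> bounded_below C G.
Proof.
move=> G_unit GC w; set y := w *m G^T.
have wE : w = y *m (invmx G)^T.
  by rewrite /y -mulmxA -trmx_mul mulVmx // trmx1 mulmx1.
have y_ge0 := rdot_ge0 y; clearbody y.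
apply: le_trans (ler_wpM2r y_ge0 GC); rewrite mulr_suml rdot_sqr.
apply: ler_sum => k _; rewrite rdot_sqr mulrC.
have -> : w 0 k = \sum_j y 0 j * invmx G k j.
  by rewrite [in LHS]wE mxE; apply: eq_bigr => j _; rewrite mxE.
exact: sqr_sum_mul_le.
Qed.

Lemma bounded_below_eigenvalue r c C (A : 'M[R]_(r, c)) a :
  bounded_below C A -> eigenvalue (A^T *m A) a -> 1 <= C * a.
Proof.
move=> Ab /eigenvalueP [v vA v_neq0].
have vA2 : rdot (v *m A^T) (v *m A^T) = a * rdot v v.
  by rewrite /rdot trmx_mul trmxK mulmxA -(mulmxA v) vA -scalemxAl mxE.
have v_gt0 : 0 < rdot v v by rewrite lt_def rdot_eq0 v_neq0 rdot_ge0.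
by rewrite -(ler_pM2r v_gt0) mul1r -mulrA -vA2.
Qed.

End BoundedBelow.

Section MatrixContinuity.
Variables (R : realType) (T : topologicalType).

Lemma det_continuous n (N : T -> 'M[R]_n) t :
  (forall i j, {for t, continuous (fun s => N s i j)}) ->
  {for t, continuous (fun s => \det (N s))}.
Proof.
move=> Nc; apply: (cvg_big add_continuous) => s _.
apply: cvgM; first exact: cvg_cst.
by apply: (cvg_big mul_continuous) => i _; exact: Nc.
Qed.

Lemma adj_scale_continuous n (N : T -> 'M[R]_n) t i j :
  (forall i j, {for t, continuous (fun s => N s i j)}) -> \det (N t) != 0 ->
  {for t, continuous (fun s => ((\det (N s))^-1 *: \adj (N s)) i j)}.
Proof.
move=> Nc det_neq0.
rewrite (_ : (fun s => _) = fun s => (\det (N s))^-1 * cofactor (N s) j i);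
  last by apply: funext => s; rewrite !mxE.
apply: cvgM; first exact: cvgV (det_continuous Nc).
apply: cvgM; first exact: cvg_cst.
apply: det_continuous => k l.
rewrite (_ : (fun s => _) = fun s => N s (lift j k) (lift i l)) ?Nc //.
by apply: funext => s; rewrite !mxE.
Qed.

End MatrixContinuity.

Definition separated {R : realType} (eps : R) {n : nat} : set 'rV[R]_n :=
  [set x | (forall i, eps <= x 0 i <= 1 - eps) /\
           (forall i j, i != j -> eps <= `|x 0 i - x 0 j|)].

Lemma separated_compact (R : realType) (eps : R) n :
  compact (separated eps : set 'rV[R]_n).
Proof.
pose box := [set v : 'rV[R]_n | forall i, `[eps, 1 - eps]%classic (v 0 i)].
have box_compact : compact box.
  apply: (@rV_compact _ _ (fun=> `[eps, 1 - eps]%classic)) => _.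
  exact: segment_compact.
apply: (subclosed_compact _ box_compact); last first.
  by move=> x [x_box _] i /=; rewrite in_itv /=; exact: x_box.
pose C (k : 'I_n * 'I_n) : set 'rV[R]_n :=
  ((fun v : 'rV[R]_n => v 0 k.1) @^-1` `[eps, 1 - eps]%classic) `&`
  ((fun v : 'rV[R]_n => `|v 0 k.1 - v 0 k.2|) @^-1`
     (if k.1 == k.2 then setT else [set r | eps <= r])).
have -> : separated eps = \bigcap_(k in setT) C k.
  apply/seteqP; split => [x [x_box x_sep] [i j] _|x xC]; split => /=.
  - by rewrite in_itv /=; exact: x_box.
  - by case: eqP => //= /eqP; exact: x_sep.
  - by move=> i; have [/=] := xC (i, i) I; rewrite in_itv.
  - by move=> i j ij; have [_ /=] := xC (i, j) I; rewrite (negbTE ij).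
apply: closed_bigI => k _; apply: closedI.
  apply: closed_comp => [v _|]; first exact: coord_continuous.
  exact: interval_closed.
apply: closed_comp => [v _|].
  apply: (continuous_comp (f := fun v : 'rV[R]_n => v 0 k.1 - v 0 k.2)).
    by apply: continuousB; exact: coord_continuous.
  exact: norm_continuous.
by case: ifP => _; [exact: closedT | exact: closed_ge].
Qed.

Lemma sv_min_bounded_below (R : realType) r c C (A : 'M[R]_(r, c)) :
  (0 < c)%N -> 0 < C -> bounded_below C A -> Num.sqrt C^-1 <= sv_min R r c A.
Proof.
move=> c_gt0 C_gt0 Ab; apply: lb_le_inf.
  have [a Aa] : exists a, eigenvalue (A^T *m A) a.
    by apply: symmetric_real_eigenvalue; rewrite // trmx_mul trmxK.
  by exists (Num.sqrt a), a.
move=> _ [a Aa <-].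
have Ca : C^-1 <= a.
  by rewrite -[C^-1]mulr1 ler_pdivrMl //; exact: bounded_below_eigenvalue Ab Aa.
by rewrite ler_sqrt // (le_trans _ Ca) // invr_ge0 ltW.
Qed.

Section LambdaMatrix.
Variables (R : realType) (h : nat -> R -> R) (M : nat).
Hypothesis h_int : forall m, (1 <= m <= M)%N ->
  lebesgue_measure.-integrable [set x : R | 0 < x < 1] (EFin \o h m).
Hypothesis h_cont : forall m, (1 <= m <= M)%N ->
  {within [set x : R^o | 0 < x < 1], continuous (h m : R^o -> R^o)}.

Definition prim (m : nat) (p : R) : R :=
  (\int[lebesgue_measure]_(t in `]0, p]%classic) h m t)%R.

(* Written through the primitive [prim m], so that continuity in [p] follows
   from the fundamental theorem of calculus. *)
Definition lamc (d : bool) (m : nat) (p : R) : R :=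
  if m == 0%N then 1
  else if d then p^-1 * prim m p
  else (1 - p)^-1 *
       ((\int[lebesgue_measure]_(t in `]0, 1[%classic) h m t)%R - prim m p).

Lemma set_itv_oo (a b : R) : [set x : R | a < x < b] = `]a, b[%classic.
Proof. by apply/seteqP; split => x; rewrite /= in_itv. Qed.

Lemma lam_lamc d m p : (m <= M)%N -> 0 < p < 1 -> lam R h d m p = lamc d m p.
Proof.
move=> mM /andP[p0 p1]; rewrite /lam /lamc; case: eqP => // /eqP m0.
have m1 : (1 <= m <= M)%N by rewrite lt0n m0.
have hi := h_int m1; rewrite set_itv_oo in hi.
case: d; rewrite set_itv_oo /prim.
  rewrite Rintegral_itv_bndo_bndc //.
  by apply: integrableS hi => //; apply: subset_itvl; rewrite bnd_simp ltW.
by rewrite Rintegral_itvB // bnd_simp ltW.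
Qed.

Lemma prim_continuous m p : (1 <= m <= M)%N -> 0 < p < 1 ->
  {for p, continuous (prim m)}.
Proof.
move=> m1 /andP[p0 p1].
have hc : {for p, continuous (h m)}.
  move: (h_cont m1); rewrite continuous_open_subspace; last first.
    by rewrite set_itv_oo; exact: itv_open.
  by apply; apply/mem_set; rewrite /= p0 p1.
have [|||dF _] := @continuous_FTC1 R (h m) (BRight 0) p ((p + 1) / 2) _ _ _ hc.
- lra.
- have hi := h_int m1; rewrite set_itv_oo in hi; apply: integrableS hi => //.
  by apply: subset_itvl; rewrite bnd_simp; lra.
- by [].
by apply: differentiable_continuous; rewrite -derivable1_diffP; exact: dF.
Qed.

Lemma lamc_continuous d m p : (m <= M)%N -> 0 < p < 1 ->
  {for p, continuous (lamc d m)}.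
Proof.
move=> mM /andP[p0 p1]; rewrite /lamc; case: eqP => [_|/eqP m0].
  exact: cvg_cst.
have m1 : (1 <= m <= M)%N by rewrite lt0n m0.
have primc := prim_continuous m1 (introT andP (conj p0 p1)).
case: d; apply: continuousM => //.
- by apply: continuousV; [rewrite gt_eqF | exact: cvg_id].
- apply: continuousV; first by rewrite subr_eq0 gt_eqF.
  by apply: continuousB; [exact: cvg_cst | exact: cvg_id].
- by apply: continuousB => //; exact: cvg_cst.
Qed.

Variable eps : R.
Hypothesis eps_gt0 : 0 < eps.

Definition lam_mx (d : bool) (x : 'rV[R]_M.+1) : 'M[R]_M.+1 :=
  \matrix_(j, m) lamc d m (x 0 j).

Lemma separated_in01 (x : 'rV[R]_M.+1) j : separated eps x -> 0 < x 0 j < 1.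
Proof.
case=> x_box _; have /andP[x_ge x_le] := x_box j.
by rewrite (lt_le_trans eps_gt0 x_ge) (le_lt_trans x_le) // ltrBlDr ltrDl.
Qed.

Lemma lam_mx_det d x : unisolvent R M.+1 (fun m : 'I_M.+1 => lam R h d m) ->
  separated eps x -> \det (lam_mx d x) != 0.
Proof.
move=> U x_sep.
have x_inj : injective (fun j : 'I_M.+1 => x 0 j).
  move=> i j xij; apply/eqP; apply: contraT => ij.
  by have := x_sep.2 i j ij; rewrite xij subrr normr0 leNgt eps_gt0.
rewrite -det_tr; have := U _ x_inj (fun j => separated_in01 j x_sep).
congr (\det _ != 0); apply/matrixP => i j; rewrite !mxE lam_lamc //.
  by rewrite -ltnS.
exact: separated_in01.
Qed.

Lemma lam_mx_continuous d x i j : separated eps x ->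
  {for x, continuous (fun y => lam_mx d y i j)}.
Proof.
move=> x_sep.
rewrite (_ : (fun _ => _) = lamc d j \o (fun y : 'rV[R]_M.+1 => y 0 i));
  last by apply: funext => y; rewrite mxE.
apply: (continuous_comp (f := fun y : 'rV[R]_M.+1 => y 0 i)).
  exact: coord_continuous.
by apply: lamc_continuous; [rewrite -ltnS | exact: separated_in01].
Qed.

Lemma lam_mx_invmx_bounded :
  unisolvent R M.+1 (fun m : 'I_M.+1 => lam R h true m) ->
  unisolvent R M.+1 (fun m : 'I_M.+1 => lam R h false m) ->
  exists2 B, 0 < B & forall d x, separated eps x ->
    \sum_i \sum_j invmx (lam_mx d x) i j ^+ 2 <= B.
Proof.
move=> U1 U0; have U d : unisolvent R M.+1 (fun m : 'I_M.+1 => lam R h d m).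
  by case: d.
(* [invmx] through the adjugate, which is continuous where [\det] is not 0. *)
pose phi x := \sum_(d : bool) \sum_i \sum_j
  ((\det (lam_mx d x))^-1 *: \adj (lam_mx d x)) i j ^+ 2.
have phi_cont : {within separated eps, continuous phi}.
  apply: continuous_in_subspaceT => x /set_mem x_sep.
  apply: (cvg_big add_continuous (F := nbhs x)) => d _.
  apply: (cvg_big add_continuous (F := nbhs x)) => i _.
  apply: (cvg_big add_continuous (F := nbhs x)) => j _.
  have entry_cont k l : {for x, continuous (fun y => lam_mx d y k l)}.
    exact: lam_mx_continuous.
  by apply: cvgM; apply: adj_scale_continuous => //; exact: lam_mx_det.
have [B [_ phiB]] := compact_bounded
  (continuous_compact phi_cont (@separated_compact R eps M.+1)).
exists (`|B| + 1) => [|d x x_sep]; first by rewrite ltr_pwDr.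
have phi_le : phi x <= `|B| + 1.
  apply: le_trans (ler_norm _) _; apply: phiB; last by exists x.
  by rewrite (le_lt_trans (ler_norm B)) // ltrDl.
have unit_x : lam_mx d x \in unitmx by rewrite unitmxE unitfE lam_mx_det.
apply: le_trans phi_le; rewrite /phi (bigD1 d) //= /invmx unit_x lerDl.
by do 3!(apply: sumr_ge0 => ? _); exact: sqr_ge0.
Qed.

Lemma rowsub_Ad K d (p : 'I_K.+1 -> R) (s : 'I_M.+1 -> 'I_K.+1) :
  (forall j, 0 < p (s j) < 1) ->
  rowsub s (Ad R h M K d p) = lam_mx d (\row_j p (s j)).
Proof.
move=> p01; apply/matrixP => j m; rewrite !mxE lam_lamc //.
by rewrite -ltnS.
Qed.

Lemma Amat_bounded_below :
  unisolvent R M.+1 (fun m : 'I_M.+1 => lam R h true m) ->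
  unisolvent R M.+1 (fun m : 'I_M.+1 => lam R h false m) ->
  exists2 C, 0 < C & forall K (p : 'I_K.+1 -> R) (S : {set 'I_K.+1}),
    (forall l, eps <= p l <= 1 - eps) -> #|S| = M.+1 ->
    {in S &, forall j k, j != k -> eps <= `|p j - p k|} ->
    bounded_below C (Amat R h M K p).
Proof.
move=> U1 U0; have [C C_gt0 invC] := lam_mx_invmx_bounded U1 U0.
exists C => // K p S p_box cardS S_sep.
pose s := enum_val \o cast_ord (esym cardS).
have s_inj : injective s.
  by apply: inj_comp; [exact: enum_val_inj | exact: cast_ord_inj].
have x_sep : separated eps (\row_j p (s j)).
  split => [j|i j ij]; rewrite !mxE; first exact: p_box.
  by apply: S_sep; rewrite ?enum_valP // (inj_eq s_inj).
have Ad_bounded d : bounded_below C (Ad R h M K d p).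
  apply: (bounded_below_rowsub (ltW C_gt0) s_inj).
  rewrite rowsub_Ad => [|j]; last first.
    by have := separated_in01 j x_sep; rewrite mxE.
  apply: bounded_below_invmx (invC d _ x_sep).
  by rewrite unitmxE unitfE lam_mx_det //; case: d.
exact: bounded_below_block_diag.
Qed.

End LambdaMatrix.

Theorem lemmaB1 (R : realType) (M K : nat) (h : nat -> R -> R)
  (delta zeta eps : R) (Theta : set 'cV[R]_(M.+1 + M.+1)) :
  (1 <= M)%N ->
  (forall m, (1 <= m <= M)%N ->
     {within [set x : R^o | 0 < x < 1], continuous (h m : R^o -> R^o)}) ->
  (forall m, (1 <= m <= M)%N ->
     lebesgue_measure.-integrable [set x : R | 0 < x < 1] (EFin \o h m)) ->
  0 < delta -> 0 < zeta -> 0 < eps < 2^-1 ->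
  compact (Theta : set 'cV[R^o]_(M.+1 + M.+1)) ->
  interior (Theta : set 'cV[R^o]_(M.+1 + M.+1)) !=set0 ->
  exists c : R, 0 < c /\
    forall (theta : 'cV[R]_(M.+1 + M.+1)) (q p : 'I_K.+1 -> R)
           (mu : bool -> 'I_K.+1 -> probability R R),
      Ps R h M K delta zeta eps Theta theta q p mu ->
      c <= sv_min R _ _ (Amat R h M K p).
Proof.
move=> _ h_cont h_int _ _ /andP[eps_gt0 _] _ _.
have [[U1 U0]|not_unisolvent] := pselect
  (unisolvent R M.+1 (fun m : 'I_M.+1 => lam R h true m) /\
   unisolvent R M.+1 (fun m : 'I_M.+1 => lam R h false m)); last first.
  exists 1; split => // theta q p mu.
  by move=> [_ [_ [_ [_ [_ [_ [_ [_ [U1 [U0 _]]]]]]]]]]; case: not_unisolvent.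
have [C C_gt0 Amat_bounded] := Amat_bounded_below h_int h_cont eps_gt0 U1 U0.
exists (Num.sqrt C^-1); split; first by rewrite sqrtr_gt0 invr_gt0.
move=> theta q p mu.
move=> [_ [_ [_ [_ [_ [p_box [_ [_ [_ [_ [S [cardS S_sep]]]]]]]]]]]].
by apply: sv_min_bounded_below => //; exact: Amat_bounded p_box cardS S_sep.
Qed.
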